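(* In the monoid $M$ defined below, the set $I=C\cup D\cup E\cup\{0\}$, where $C=\{a^pc_i:p,i\in\mathbb{Z}\}$, $D=\{a^pd:p\in\mathbb{Z}\}$, $E=\{a^pe:p\in\mathbb{Z}\}$, is an rf-compatible ideal of $M$, and $N=(M\setminus I)\cup\{0\}=\{a^p\}\cup\{a^pb_i\}\cup\{0\}$ is a submonoid of $M$.
   Context: Let $\tau:\mathbb{Z}\setminus\{0\}\to\mathbb{Z}$, $\tau(2^k(2r+1))=\frac{2}{3}(2^{2\lceil k/2\rceil}-1)$ ($k,r\in\mathbb{Z}$, $k\ge0$). Let $M$ be the commutative monoid with zero $0$ given by generators $a,a^{-1},b_i,c_i$ ($i\in\mathbb{Z}$), $d,e$ and relations $aa^{-1}=a^{-1}a=1$; $b_ic_j=d$ if $i=j$ and $b_ic_j=a^{\tau(j-i)}e$ if $i\neq j$; and $b_ib_j=b_id=b_ie=c_jc_k=c_jd=c_je=dd=de=ee=0$ for all $i,j,k\in\mathbb{Z}$. Its elements have distinct normal forms $a^p$, $a^pb_i$, $a^pc_i$, $a^pd$, $a^pe$ ($p,i\in\mathbb{Z}$) and $0$. An ideal $I$ of a monoid $M$ is rf-compatible with $M$ if for any two distinct $s,t\in I$ there is a congruence $\rho$ of finite index on $I$ with $s/\rho\neq t/\rho$ such that $\rho\cup\Delta_M$ is a congruence on $M$, where $\Delta_M=\{(x,x):x\in M\}$. *)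

From Stdlib Require Import ZArith List.
Open Scope Z_scope.

Fixpoint pval2 (p : positive) : nat :=
  match p with xO q => S (pval2 q) | _ => O end.

(* tau(2^k(2r+1)) = 2/3 (2^(2 ceil(k/2)) - 1), for n <> 0
   (the value at 0 is irrelevant and never used). *)
Definition tau (n : Z) : Z :=
  let k := pval2 (Z.to_pos (Z.abs n)) in
  (2 * (2 ^ (2 * Z.of_nat ((k + 1) / 2)) - 1)) / 3.

(* Elements of M, by their normal forms:
   A p = a^p, B p i = a^p b_i, C p i = a^p c_i, D p = a^p d, E p = a^p e, Zero = 0 *)
Inductive elt : Type :=
| A (p : Z)
| B (p i : Z)
| C (p i : Z)
| D (p : Z)
| E (p : Z)
| Zero.

Definition shift (q : Z) (x : elt) : elt :=
  match x with
  | A p => A (p + q)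
  | B p i => B (p + q) i
  | C p i => C (p + q) i
  | D p => D (p + q)
  | E p => E (p + q)
  | Zero => Zero
  end.

(* b_i c_j = d if i = j, a^{tau(j-i)} e otherwise *)
Definition bc (p i q j : Z) : elt :=
  if Z.eq_dec i j then D (p + q) else E (p + q + tau (j - i)).

Definition Mmul (x y : elt) : elt :=
  match x, y with
  | A p, _ => shift p y
  | _, A q => shift q x
  | B p i, C q j => bc p i q j
  | C q j, B p i => bc p i q j
  | _, _ => Zero
  end.

Definition Mone : elt := A 0.

Definition inI (x : elt) : Prop :=
  match x with C _ _ | D _ | E _ | Zero => True | _ => False end.

Definition inN (x : elt) : Prop := ~ inI x \/ x = Zero.

Definition is_ideal {T : Type} (mul : T -> T -> T) (P : T -> Prop) : Prop :=
  (exists x, P x) /\ (forall x m, P x -> P (mul x m) /\ P (mul m x)).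

Definition is_submonoid {T : Type} (mul : T -> T -> T) (one : T) (P : T -> Prop) : Prop :=
  P one /\ (forall x y, P x -> P y -> P (mul x y)).

Definition is_congruence_on {T : Type} (mul : T -> T -> T) (P : T -> Prop)
  (rho : T -> T -> Prop) : Prop :=
  (forall x y, rho x y -> P x /\ P y) /\
  (forall x, P x -> rho x x) /\
  (forall x y, rho x y -> rho y x) /\
  (forall x y z, rho x y -> rho y z -> rho x z) /\
  (forall x y z, rho x y -> P z -> rho (mul z x) (mul z y) /\ rho (mul x z) (mul y z)).

Definition finite_index_on {T : Type} (P : T -> Prop) (rho : T -> T -> Prop) : Prop :=
  exists l : list T, forall x, P x -> exists y, In y l /\ rho x y.

Definition rf_compatible {T : Type} (mul : T -> T -> T) (I : T -> Prop) : Prop :=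
  forall s t, I s -> I t -> s <> t ->
    exists rho : T -> T -> Prop,
      is_congruence_on mul I rho /\ finite_index_on I rho /\ ~ rho s t /\
      is_congruence_on mul (fun _ => True) (fun x y => rho x y \/ x = y).

From Pilot Require Import Defs.
From Stdlib Require Import ZArith Znumtheory List Lia.
Open Scope Z_scope.

(* The ideal I is null (I * I = 0), a^q shifts exponents, and b_i sends a^q c_j to
   a^(q + tau(j - i)) e, or to a^q d when j = i.  Reducing exponents of a modulo 2^N and
   indices of c modulo 4^N is therefore compatible with M as soon as tau is 2-adically
   continuous off 0 with this loss of precision: n = n' mod 4^N forces tau n = tau n' mod 2^N
   (the valuations agree, or both are >= 2N and 3 tau + 2 = 0 mod 2^N for both).  The last fact
   says tau tends to -2/3 at 0, so a^q d may be glued to a^(q + tau(4^N)) e.  These congruences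
   separate the points of I because 3x <> 2 for integers x. *)

Definition pow2 (k : nat) : Z := 2 ^ Z.of_nat k.

Lemma pow2_pos k : 0 < pow2 k.
Proof. apply Z.pow_pos_nonneg; lia. Qed.

Lemma pow2_succ k : pow2 (S k) = 2 * pow2 k.
Proof. unfold pow2; rewrite Nat2Z.inj_succ, Z.pow_succ_r by lia; ring. Qed.

Lemma pow2_divide k l : (k <= l)%nat -> (pow2 k | pow2 l).
Proof.
  intros Hkl; exists (2 ^ (Z.of_nat l - Z.of_nat k)); unfold pow2.
  rewrite <- Z.pow_add_r by lia; f_equal; lia.
Qed.

Lemma pow2_gt X : exists N, X < pow2 N.
Proof.
  exists (Z.to_nat X); unfold pow2.
  pose proof (Z.pow_gt_lin_r 2 (Z.of_nat (Z.to_nat X)) ltac:(lia) ltac:(lia)); lia.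
Qed.

Lemma pval2_spec k p : (k <= pval2 p)%nat <-> (pow2 k | Zpos p).
Proof.
  revert p; induction k as [|k IHk]; intros p.
  - split; intros; [apply Z.divide_1_l | lia].
  - assert (Hodd : forall q, ~ (pow2 (S k) | 2 * q + 1)).
    { intros q H; rewrite pow2_succ in H.
      destruct (Z.divide_trans 2 _ _ (Z.divide_factor_l 2 (pow2 k)) H); lia. }
    destruct p as [q|q|]; cbn [pval2].
    + split; [lia|rewrite Pos2Z.inj_xI; intros H; destruct (Hodd _ H)].
    + rewrite pow2_succ; change (Zpos q~0) with (2 * Zpos q).
      rewrite Z.mul_divide_cancel_l, <- IHk by lia; lia.
    + split; [lia|intros H; destruct (Hodd 0 H)].
Qed.

Definition val2 (n : Z) : nat := pval2 (Z.to_pos (Z.abs n)).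

Lemma val2_spec n k : n <> 0 -> (k <= val2 n)%nat <-> (pow2 k | n).
Proof.
  intros Hn; unfold val2; rewrite pval2_spec, Z2Pos.id by lia.
  apply Z.divide_abs_r.
Qed.

Lemma pow2_divide_congr k K n n' :
  (k <= K)%nat -> (pow2 K | n - n') -> (pow2 k | n) -> (pow2 k | n').
Proof.
  intros HkK HK Hn; replace n' with (n - (n - n')) by ring.
  apply Z.divide_sub_r; [exact Hn|]; exact (Z.divide_trans _ _ _ (pow2_divide _ _ HkK) HK).
Qed.

Lemma val2_congr K n n' : n <> 0 -> n' <> 0 -> (pow2 K | n - n') ->
  val2 n = val2 n' \/ (K <= val2 n /\ K <= val2 n')%nat.
Proof.
  intros Hn Hn' HK.
  assert (HK' : (pow2 K | n' - n)) by (replace (n' - n) with (- (n - n')) by ring; apply Z.divide_opp_r, HK).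
  assert (Hiff : forall k, (k <= K)%nat -> (k <= val2 n)%nat <-> (k <= val2 n')%nat).
  { intros k Hk; rewrite !val2_spec by assumption.
    split; apply pow2_divide_congr with K; assumption. }
  destruct (Nat.lt_ge_cases (val2 n) K), (Nat.lt_ge_cases (val2 n') K); [| | |now right].
  all: left.
  all: pose proof (Hiff (val2 n)); pose proof (Hiff (S (val2 n)));
       pose proof (Hiff (val2 n')); pose proof (Hiff (S (val2 n'))); lia.
Qed.

Lemma tau_val2 n : tau n = (2 * (2 ^ (2 * Z.of_nat ((val2 n + 1) / 2)) - 1)) / 3.
Proof. reflexivity. Qed.

Lemma three_divide_pow4_sub1 c : (3 | 2 ^ (2 * Z.of_nat c) - 1).
Proof.
  induction c as [|c [m Hm]]; [exists 0; reflexivity|].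
  exists (4 * m + 1); rewrite Nat2Z.inj_succ, Z.mul_succ_r, Z.pow_add_r by lia.
  change (2 ^ 2) with 4; lia.
Qed.

Lemma three_tau_add_two n :
  3 * tau n + 2 = 2 * 2 ^ (2 * Z.of_nat ((val2 n + 1) / 2)).
Proof.
  rewrite tau_val2; destruct (three_divide_pow4_sub1 ((val2 n + 1) / 2)) as [m Hm].
  rewrite Hm, Z.mul_assoc, Z.div_mul by lia; lia.
Qed.

Lemma tau_large_val2 N n : (2 * N <= val2 n)%nat -> (pow2 N | 3 * tau n + 2).
Proof.
  intros H; rewrite three_tau_add_two; apply Z.divide_mul_r.
  replace (2 * Z.of_nat ((val2 n + 1) / 2)) with (Z.of_nat (2 * ((val2 n + 1) / 2))) by lia.
  apply pow2_divide; pose proof (Nat.div_mod (val2 n + 1) 2); pose proof (Nat.mod_upper_bound (val2 n + 1) 2).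
  lia.
Qed.

Lemma rel_prime_3_pow2 N : rel_prime 3 (pow2 N).
Proof.
  induction N as [|N IHN]; [apply rel_prime_sym, rel_prime_1|].
  rewrite pow2_succ; apply rel_prime_mult; [apply Zgcd_1_rel_prime; reflexivity|exact IHN].
Qed.

Lemma tau_congr N n n' : n <> 0 -> n' <> 0 -> (pow2 (2 * N) | n - n') ->
  (pow2 N | tau n - tau n').
Proof.
  intros Hn Hn' Hd; destruct (val2_congr _ _ _ Hn Hn' Hd) as [Hv|[Hv Hv']].
  - rewrite !(tau_val2 n), !(tau_val2 n'), Hv, Z.sub_diag; apply Z.divide_0_r.
  - apply (Gauss _ 3); [|apply rel_prime_sym, rel_prime_3_pow2].
    replace (3 * (tau n - tau n')) with ((3 * tau n + 2) - (3 * tau n' + 2)) by ring.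
    apply Z.divide_sub_r; apply tau_large_val2; assumption.
Qed.

Lemma Mmul_comm x y : Mmul x y = Mmul y x.
Proof. destruct x, y; simpl; try reflexivity; f_equal; ring. Qed.

Lemma inI_shift q x : inI x -> inI (Defs.shift q x).
Proof. destruct x; simpl; auto. Qed.

Lemma inI_bc p i q j : inI (bc p i q j).
Proof. unfold bc; destruct (Z.eq_dec i j); exact I. Qed.

Lemma inI_mul_l x m : inI x -> inI (Mmul m x).
Proof. destruct x, m; simpl; try contradiction; auto using inI_bc. Qed.

Lemma inI_mul_inI x y : inI x -> inI y -> Mmul x y = Zero.
Proof. destruct x, y; simpl; easy. Qed.

Lemma inI_ideal : is_ideal Mmul inI.
Proof.
  split; [exists Zero; exact I|].
  intros x m Hx; rewrite (Mmul_comm x m); split; apply inI_mul_l, Hx.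
Qed.

Lemma inN_submonoid : is_submonoid Mmul Mone inN.
Proof.
  split; [left; simpl; auto|].
  intros [p|p i| | | |] [q|q j| | | |]; unfold inN; simpl; intuition discriminate.
Qed.

Lemma mod_eq_divide m a b : 0 < m -> a mod m = b mod m <-> (m | a - b).
Proof.
  intros Hm; split.
  - intros H; exists (a / m - b / m).
    pose proof (Z.div_mod a m ltac:(lia)); pose proof (Z.div_mod b m ltac:(lia)); nia.
  - intros [k Hk]; replace a with (b + k * m) by lia; apply Z.mod_add; lia.
Qed.

Lemma divide_small m d : (m | d) -> Z.abs d < m -> d = 0.
Proof.
  intros Hmd Hlt; destruct (Z.eq_dec d 0) as [|Hne]; [assumption|].
  pose proof (Zdivide_bounds _ _ Hmd Hne); lia.
Qed.

Lemma mod_eq_small m a b : Z.abs (a - b) < m -> a mod m = b mod m -> a = b.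
Proof.
  intros Hlt Hmod; apply mod_eq_divide in Hmod; [|lia].
  apply divide_small in Hmod; lia.
Qed.

Definition key (N : nat) (x : elt) : elt :=
  match x with
  | C q j => C (q mod pow2 N) (j mod pow2 (2 * N))
  | D p => E ((p + tau (pow2 (2 * N))) mod pow2 N)
  | E p => E (p mod pow2 N)
  | _ => x
  end.

Definition rho (N : nat) (x y : elt) : Prop := inI x /\ inI y /\ key N x = key N y.

Lemma key_shift N q x : inI x -> key N (Defs.shift q x) = key N (Defs.shift q (key N x)).
Proof.
  pose proof (pow2_pos N); pose proof (pow2_pos (2 * N)).
  destruct x; cbn [key Defs.shift]; intros Hx; try contradiction; f_equal;
    rewrite ?Z.mod_mod, ?Z.add_mod_idemp_l by lia; try reflexivity.
  f_equal; ring.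
Qed.

(* [key] glues [d = b_i c_i] to [a^(tau (2^(2N))) e]: [tau] is read at a nonzero
   representative of the residue of [j - i = 0] modulo [2^(2N)]. *)
Definition nonzero_repr (N : nat) (d : Z) : Z :=
  if Z.eq_dec d 0 then pow2 (2 * N) else d.

Lemma nonzero_repr_neq0 N d : nonzero_repr N d <> 0.
Proof. pose proof (pow2_pos (2 * N)); unfold nonzero_repr; destruct (Z.eq_dec d 0); lia. Qed.

Lemma nonzero_repr_congr N d d' :
  (pow2 (2 * N) | d - d') -> (pow2 (2 * N) | nonzero_repr N d - nonzero_repr N d').
Proof.
  intros Hd; unfold nonzero_repr.
  destruct (Z.eq_dec d 0), (Z.eq_dec d' 0); subst; rewrite ?Z.sub_0_r in *.
  - rewrite Z.sub_diag; apply Z.divide_0_r.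
  - replace (pow2 (2 * N) - d') with (pow2 (2 * N) + (0 - d')) by ring.
    apply Z.divide_add_r; [apply Z.divide_refl|assumption].
  - apply Z.divide_sub_r; [assumption|apply Z.divide_refl].
  - assumption.
Qed.

Lemma key_bc N p i q j :
  key N (bc p i q j) = E ((p + q + tau (nonzero_repr N (j - i))) mod pow2 N).
Proof.
  unfold bc, nonzero_repr.
  destruct (Z.eq_dec i j), (Z.eq_dec (j - i) 0); try lia; reflexivity.
Qed.

Lemma key_bc_compat N p i q j q' j' :
  q mod pow2 N = q' mod pow2 N -> j mod pow2 (2 * N) = j' mod pow2 (2 * N) ->
  key N (bc p i q j) = key N (bc p i q' j').
Proof.
  pose proof (pow2_pos N); pose proof (pow2_pos (2 * N)).
  rewrite !key_bc, !mod_eq_divide by assumption; intros Hq Hj; f_equal.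
  apply mod_eq_divide; [assumption|].
  replace (p + q + tau (nonzero_repr N (j - i)) - (p + q' + tau (nonzero_repr N (j' - i))))
    with ((q - q') + (tau (nonzero_repr N (j - i)) - tau (nonzero_repr N (j' - i)))) by ring.
  apply Z.divide_add_r; [assumption|].
  apply tau_congr; try apply nonzero_repr_neq0.
  apply nonzero_repr_congr; replace (j - i - (j' - i)) with (j - j') by ring; assumption.
Qed.

Lemma rho_mul_l N x y z :
  rho N x y -> rho N (Mmul z x) (Mmul z y) \/ Mmul z x = Mmul z y.
Proof.
  intros (Hx & Hy & Hk); destruct z as [p|p i|p i|p|p|];
    try (right; rewrite !inI_mul_inI by (assumption || exact I); reflexivity).
  - left; split; [|split]; try (apply inI_shift; assumption).
    simpl; rewrite (key_shift N p x Hx), (key_shift N p y Hy), Hk; reflexivity.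
  - destruct x, y; try contradiction; try discriminate Hk; simpl; auto.
    injection Hk; intros Hj Hq.
    left; split; [|split]; try apply inI_bc; apply key_bc_compat; assumption.
Qed.

Lemma rho_congruence_on_I N : is_congruence_on Mmul inI (rho N).
Proof.
  unfold rho; split; [|split; [|split; [|split]]].
  - tauto.
  - auto.
  - intros x y (? & ? & ?); auto.
  - intros x y z (? & ? & ?) (? & ? & ?); repeat split; congruence.
  - intros x y z (Hx & Hy & _) Hz.
    rewrite !(inI_mul_inI z), !(inI_mul_inI _ z) by assumption; repeat split.
Qed.

Lemma rho_refl_congruence N :
  is_congruence_on Mmul (fun _ => True) (fun x y => rho N x y \/ x = y).
Proof.
  destruct (rho_congruence_on_I N) as (_ & _ & Hsym & Htrans & _).
  split; [|split; [|split; [|split]]].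
  - auto.
  - auto.
  - intros x y [H|Hxy]; subst; auto.
  - intros x y z [H|Hxy] [H'|Hyz]; subst; eauto.
  - intros x y z [H|Hxy] _; [|subst; auto].
    rewrite (Mmul_comm x), (Mmul_comm y); split; apply rho_mul_l, H.
Qed.

Definition residues (m : Z) : list Z := map Z.of_nat (seq 0 (Z.to_nat m)).

Lemma in_residues m a : 0 < m -> In (a mod m) (residues m).
Proof.
  intros Hm; apply in_map_iff; exists (Z.to_nat (a mod m)).
  pose proof (Z.mod_pos_bound a m Hm); split; [lia|apply in_seq; lia].
Qed.

Definition key_range (N : nat) : list elt :=
  Zero :: map E (residues (pow2 N)) ++
  flat_map (fun q => map (C q) (residues (pow2 (2 * N)))) (residues (pow2 N)).

Lemma key_in_range N x : inI x -> In (key N x) (key_range N).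
Proof.
  pose proof (pow2_pos N); pose proof (pow2_pos (2 * N)).
  destruct x; intros Hx; try contradiction; cbn [key]; [right..|left; reflexivity];
    apply in_or_app; [right|left|left].
  - apply in_flat_map; exists (p mod pow2 N); split; [apply in_residues; assumption|].
    apply in_map, in_residues; assumption.
  - apply in_map, in_residues; assumption.
  - apply in_map, in_residues; assumption.
Qed.

Lemma rho_key N x : inI x -> rho N x (key N x).
Proof.
  pose proof (pow2_pos N); pose proof (pow2_pos (2 * N)).
  destruct x; intros Hx; try contradiction; repeat split;
    cbn [key]; rewrite ?Z.mod_mod by lia; reflexivity.
Qed.

Lemma rho_finite_index N : finite_index_on inI (rho N).
Proof.
  exists (key_range N); intros x Hx; exists (key N x).
  split; [apply key_in_range|apply rho_key]; assumption.
Qed.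

Lemma key_D_ne_key_E p p' : exists N, key N (D p) <> key N (E p').
Proof.
  destruct (pow2_gt (Z.abs (3 * (p - p') - 2))) as [N HN]; exists N.
  cbn [key]; intros Heq; injection Heq as Heq.
  apply mod_eq_divide in Heq; [|apply pow2_pos].
  assert (Htau : (pow2 N | 3 * tau (pow2 (2 * N)) + 2)).
  { apply tau_large_val2, val2_spec; [pose proof (pow2_pos (2 * N)); lia|apply Z.divide_refl]. }
  assert (Hdiv : (pow2 N | 3 * (p - p') - 2)).
  { replace (3 * (p - p') - 2)
      with (3 * (p + tau (pow2 (2 * N)) - p') - (3 * tau (pow2 (2 * N)) + 2)) by ring.
    apply Z.divide_sub_r; [apply Z.divide_mul_r|]; assumption. }
  apply divide_small in Hdiv; lia.
Qed.

Lemma key_separates s t : inI s -> inI t -> s <> t -> exists N, key N s <> key N t.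
Proof.
  intros Hs Ht Hst.
  destruct s as [?|? ?|q j|p|p|]; try contradiction; destruct t as [?|? ?|q' j'|p'|p'|];
    try contradiction; try (exists O; discriminate).
  - destruct (pow2_gt (Z.abs (q - q') + Z.abs (j - j'))) as [N HN]; exists N.
    assert (pow2 N <= pow2 (2 * N)) by (apply Z.divide_pos_le; [apply pow2_pos|apply pow2_divide; lia]).
    cbn [key]; intros Heq; injection Heq as Hq Hj.
    change (N + (N + 0))%nat with (2 * N)%nat in Hj.
    apply mod_eq_small in Hq; [|lia]; apply mod_eq_small in Hj; [|lia]; congruence.
  - destruct (pow2_gt (Z.abs (p - p'))) as [N HN]; exists N.
    cbn [key]; intros Heq; injection Heq as Heq.
    apply mod_eq_small in Heq; [|lia]; apply Hst; f_equal; lia.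
  - apply key_D_ne_key_E.
  - destruct (key_D_ne_key_E p' p) as [N HN]; exists N; auto.
  - destruct (pow2_gt (Z.abs (p - p'))) as [N HN]; exists N.
    cbn [key]; intros Heq; injection Heq as Heq.
    apply mod_eq_small in Heq; [|lia]; congruence.
Qed.

Theorem mainTheorem16 :
  is_ideal Mmul inI /\ rf_compatible Mmul inI /\ is_submonoid Mmul Mone inN.
Proof.
  split; [exact inI_ideal|split; [|exact inN_submonoid]].
  intros s t Hs Ht Hst; destruct (key_separates s t Hs Ht Hst) as [N HN].
  exists (rho N); split; [|split; [|split]].
  - apply rho_congruence_on_I.
  - apply rho_finite_index.
  - intros (_ & _ & Hkey); exact (HN Hkey).
  - apply rho_refl_congruence.
Qed.
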